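(* Let $r,n\ge2$, $\pi=A_1\cdots A_n\in\mathbb{S}_{2rn}$ with $A_j=(2r(j-1)+1\ \cdots\ 2rj)$, and $\mathcal{C}$ its conjugacy class. Let $t\in\mathcal{C}$ with $t\pi=\pi t$ and $g\in\mathbb{S}_{2rn}$ with $g\pi g^{-1}=t$. Write $t=A_1^{d_1}\cdots A_n^{d_n}B$ and $g^{-1}\pi g=A_1^{e_1}\cdots A_n^{e_n}B'$ with $0\le d_j,e_j\le 2r-1$ and $B,B'\in\langle B_1,\dots,B_{n-1}\rangle$. (a) If $n$ is odd, then $\sum_{j=1}^n(e_j+d_j)$ is even. (b) If $r$ and $n$ are both even, then $\sum_{j=1}^n(e_j+d_j)\equiv0\pmod 4$.
   Context: Permutations are composed right to left. $B_i$ ($1\le i\le n-1$) is the involution exchanging $2r(i-1)+m\leftrightarrow 2ri+m$ for $1\le m\le 2r$. The centralizer of $\pi$ is $\mathbb{S}_{2rn}^\pi=\langle A_1,\dots,A_n\rangle\rtimes\langle B_1,\dots,B_{n-1}\rangle\cong\mathbb{Z}_{2r}^n\rtimes\mathbb{S}_n$, so every element of it is uniquely written $A_1^{d_1}\cdots A_n^{d_n}B$ with $0\le d_j\le 2r-1$ and $B\in\langle B_1,\dots,B_{n-1}\rangle$; both $t$ and $g^{-1}\pi g$ lie in this centralizer. *)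

From mathcomp Require Import all_boot all_order all_fingroup.
From mathcomp Require Import zify.
Set Implicit Arguments. Unset Strict Implicit. Unset Printing Implicit Defensive.

(* Points of {1,...,2rn} are represented 0-based by 'I_(2*r*n): the point
   (paper) 2r*b + o + 1  (block b in [0,n), offset o in [0,2r)) is the
   ordinal with value b*(2r) + o.

   MathComp composes permutations LEFT TO RIGHT: (s * t)%g x = t (s x).
   The paper composes right to left, so the paper's product  s t  is
   MathComp's  (t * s)%g . *)

Definition blk_act (K n : nat) (bf : nat -> nat) (f : nat -> nat -> nat)
  (x : 'I_(K * n)) : 'I_(K * n) :=
  insubd x (bf (x %/ K) * K + f (x %/ K) (x %% K)).
Arguments blk_act : clear implicits.

Lemma blk_act_inj (K n : nat) (bf : nat -> nat) (f : nat -> nat -> nat) :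
  (forall b, b < n -> bf b < n) ->
  (forall b c, b < n -> c < n -> bf b = bf c -> b = c) ->
  (forall b o, o < K -> f b o < K) ->
  (forall b o p, o < K -> p < K -> f b o = f b p -> o = p) ->
  injective (blk_act K n bf f).
Proof.
move=> bfn bfi fK fi.
have key : forall x : 'I_(K * n), [/\ 0 < K, x %/ K < n, x %% K < K &
    val (blk_act K n bf f x) = bf (x %/ K) * K + f (x %/ K) (x %% K)].
  move=> x; have xlt := ltn_ord x.
  have K0 : 0 < K by case: K x xlt {fK fi} => //.
  have xb : x %/ K < n by rewrite ltn_divLR // [n * K]mulnC.
  have xo : x %% K < K by rewrite ltn_pmod.
  split=> //; rewrite /blk_act val_insubd.
  have -> : bf (x %/ K) * K + f (x %/ K) (x %% K) < K * n.
    have := bfn _ xb; have := fK (x %/ K) _ xo => h1 h2.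
    apply: (@leq_trans ((bf (x %/ K)).+1 * K)); first by rewrite mulSn addnC ltn_add2r.
    by rewrite mulnC leq_mul2l h2 orbT.
  by [].
move=> x y; case: (key x) => K0 xb xo vx; case: (key y) => _ yb yo vy exy.
have e : bf (x %/ K) * K + f (x %/ K) (x %% K) = bf (y %/ K) * K + f (y %/ K) (y %% K)
  by rewrite -vx -vy exy.
have eb : bf (x %/ K) = bf (y %/ K).
  move/(congr1 (divn^~ K)): e.
  by rewrite !divnMDl // (divn_small (fK _ _ xo)) (divn_small (fK _ _ yo)) !addn0.
have bxy := bfi _ _ xb yb eb.
have eo : f (x %/ K) (x %% K) = f (y %/ K) (y %% K).
  by move/(congr1 (modn^~ K)): e; rewrite !modnMDl (modn_small (fK _ _ xo)) (modn_small (fK _ _ yo)).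
rewrite -bxy in eo; have oxy := fi _ _ _ xo yo eo.
by apply: val_inj; rewrite /= (divn_eq x K) (divn_eq y K) bxy oxy.
Qed.

Section Perms.
Variables r n : nat.

(* A_(j+1) of the paper (j : 'I_n, 0-based): the 2r-cycle
   (2rj+1 2rj+2 ... 2r(j+1)) : rotates the offsets in block j by +1. *)
Definition cycA_bf (b : nat) := b.
Definition cycA_f (j : nat) (b o : nat) := if b == j then o.+1 %% (2 * r) else o.

Lemma cycA_inj (j : 'I_n) : injective (blk_act (2 * r) n cycA_bf (cycA_f j)).
Proof.
apply: blk_act_inj => //.
- move=> b o oK; rewrite /cycA_f; case: ifP => // _; rewrite ltn_pmod //.
  by case: (2 * r) oK.
- move=> b o p oK pK; rewrite /cycA_f; case: ifP => // _.
  have K0 : 0 < 2 * r by case: (2 * r) oK.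
  move: oK pK; rewrite leq_eqVlt => /orP[/eqP ho|ho];
    rewrite leq_eqVlt => /orP[/eqP hp|hp].
  + by move: ho hp; lia.
  + by rewrite ho modnn modn_small.
  + by rewrite hp modnn modn_small.
  + by rewrite !modn_small //; case.
Qed.

Definition cycA (j : 'I_n) : {perm 'I_(2 * r * n)} := perm (@cycA_inj j).

(* B_i of the paper (1 <= i <= n-1), for i : 'I_n: exchanges
   2r(i-1)+m <-> 2ri+m for 1 <= m <= 2r, i.e. swaps blocks i-1 and i
   preserving offsets.  (For i = 0 it is the identity; it is only used
   with 0 < i.) *)
Definition swB_bf (i : nat) (b : nat) :=
  if b == i.-1 then i else if b == i then i.-1 else b.
Definition swB_f (b o : nat) := o.

Lemma swB_inj (i : 'I_n) : injective (blk_act (2 * r) n (swB_bf i) swB_f).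
Proof.
have ilt := ltn_ord i.
apply: blk_act_inj => //.
- by move=> b bn; rewrite /swB_bf; case: ifP => _; [|case: ifP] => //; lia.
- move=> b c _ _; rewrite /swB_bf.
  by case: (b =P i.-1); case: (b =P i); case: (c =P i.-1); case: (c =P i); lia.
Qed.

Definition swB (i : 'I_n) : {perm 'I_(2 * r * n)} := perm (@swB_inj i).

(* pi = A_1 ... A_n (the A_j commute, so the order is immaterial). *)
Definition piPerm : {perm 'I_(2 * r * n)} := (\prod_(j < n) cycA j)%g.

Definition Bgrp : {set {perm 'I_(2 * r * n)}} :=
  <<[set swB i | i in [pred i : 'I_n | 0 < i]]>>%g.

End Perms.

From mathcomp Require Import all_boot all_order all_fingroup.
Set Implicit Arguments. Unset Strict Implicit. Unset Printing Implicit Defensive.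

(* A permutation z commuting with pi permutes the n blocks (by [blkperm]) and
   shifts the offsets by an amount depending only on the block
   ([centralizerE]).  Along a [blkperm]-orbit of length l the shifts add up to
   l * j for a winding number j, and the exponents in A_1^d_1 ... A_n^d_n B add
   up to the sum of the winding numbers over all blocks.  For t = g pi g^-1 and
   u = g^-1 pi g, t^l acts on block b as pi^(l j), so u^(l j) acts as pi^l on
   g^-1 of that block; but it also acts there as pi^(l j j'), with j' the
   winding number of u, hence j j' = 1 mod 2r/l.  Then l (j + j') is even, and
   4 | l (j + j' + 2) when r is even; summing over the orbits gives both claims
   (the parity claim without using that n is odd). *)

Lemma eqmod_dvd d M a c : d %| M -> a = c %[mod M] -> a = c %[mod d].
Proof. by move=> dM e; rewrite -(modn_dvdm a dM) e modn_dvdm. Qed.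

Lemma eqmod_pmul2l l M a c : 0 < l -> l * a = l * c %[mod l * M] -> a = c %[mod M].
Proof. by move=> l_gt0; rewrite -!muln_modr => /eqP; rewrite eqn_pmul2l // => /eqP. Qed.

Lemma eqmod1_add2_mod4 a c : a * c = 1 %[mod 4] -> a + c + 2 = 0 %[mod 4].
Proof.
rewrite -modnMm -modnDm -[(a + c) %% 4]modnDm.
by case: (a %% 4) (ltn_pmod a (isT : 0 < 4)) => [|[|[|[|]]]] //;
   case: (c %% 4) (ltn_pmod c (isT : 0 < 4)) => [|[|[|[|]]]].
Qed.

Lemma eqmod1_odd M a c : 2 %| M -> a * c = 1 %[mod M] -> odd a /\ odd c.
Proof.
move=> M_even /(eqmod_dvd M_even); rewrite !modn2 oddM.
by case: (odd a); case: (odd c).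
Qed.

Lemma eqmod1_dvd2 l M j j' : j * j' = 1 %[mod M] -> 2 %| l * M -> 2 %| l * (j + j').
Proof.
move=> e; rewrite dvdn2 oddM negb_and => /orP[l_even|].
  by rewrite dvdn2 oddM (negbTE l_even).
rewrite -dvdn2 => /eqmod1_odd/(_ e)[j_odd j'_odd].
by rewrite dvdn2 oddM oddD j_odd j'_odd andbF.
Qed.

Lemma eqmod1_dvd4 l M j j' : j * j' = 1 %[mod M] -> 4 %| l * M ->
  4 %| l * (j + j' + 2).
Proof.
move=> e lM4; have [l_odd|l_even] := boolP (odd l).
  have c4l : coprime 4 l by rewrite (@coprime_pexpl 2 2) // coprime2n l_odd.
  have M4 : 4 %| M by rewrite -(Gauss_dvdr M c4l).
  by apply: dvdn_mull; apply/eqP; apply: eqmod1_add2_mod4; apply: eqmod_dvd M4 e.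
have [l4|l4N] := boolP (4 %| l); first exact: dvdn_mulr.
have [l' def_l] : exists l', l = 2 * l'.
  by exists l./2; rewrite -[l in LHS]odd_double_half (negbTE l_even) add0n -mul2n.
subst l.
have l'_odd : odd l' by move: l4N; rewrite (_ : 4 = 2 * 2) // dvdn_pmul2l // dvdn2 negbK.
have M_even : 2 %| M.
  by move: lM4; rewrite -mulnA (_ : 4 = 2 * 2) // dvdn_pmul2l // dvdn2 oddM l'_odd -dvdn2.
have [j_odd j'_odd] := eqmod1_odd M_even e.
by rewrite -mulnA (_ : 4 = 2 * 2) // dvdn_pmul2l // dvdn_mull // dvdn2 !oddD j_odd j'_odd.
Qed.

Section PermOrbit.
Variables (I : finType) (s : {perm I}).

Lemma expg_card_porbit (i : I) : (s ^+ #|porbit s i|)%g i = i.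
Proof. by rewrite permX iter_porbit. Qed.

Lemma expgM_card_porbit m (i : I) : (s ^+ (m * #|porbit s i|))%g i = i.
Proof.
by elim: m => [|m IH]; rewrite ?expg0 ?perm1 // mulSn expgD permM expg_card_porbit.
Qed.

Lemma card_porbit_dvdn (i : I) a : (s ^+ a)%g i = i -> #|porbit s i| %| a.
Proof.
move=> sai; set L := #|porbit s i|.
have L_gt0 : 0 < L by rewrite lt0n card_porbit_neq0.
have samod : (s ^+ (a %% L))%g i = i.
  by move: sai; rewrite {1}(divn_eq a L) expgD permM expgM_card_porbit.
have : nth i (traject s i L) (a %% L) = nth i (traject s i L) 0.
  by rewrite !nth_traject ?ltn_pmod // -permX samod.
by move/eqP; rewrite nth_uniq ?size_traject ?ltn_pmod // uniq_traject_porbit.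
Qed.

Lemma expg_invariant (f : I -> nat) : (forall i, f (s i) = f i) ->
  forall k i, f ((s ^+ k)%g i) = f i.
Proof.
move=> fs; elim=> [|k IH] i; first by rewrite expg0 perm1.
by rewrite expgSr permM fs IH.
Qed.

Lemma dvdn_sum_invariant (f : I -> nat) m : (forall i, f (s i) = f i) ->
  (forall i, m %| #|porbit s i| * f i) -> m %| \sum_i f i.
Proof.
move=> fs m_dvd; rewrite (partition_big_imset (porbit s)) /=.
apply: dvdn_sum => _ /imsetP[i _ ->].
rewrite (eq_bigl (mem (porbit s i))) => [|k]; last by rewrite /= eq_porbit_mem.
rewrite (eq_bigr (fun=> f i)) ?sum_nat_const // => _ /porbitP[k ->].
exact: expg_invariant.
Qed.

End PermOrbit.

Section Blocks.
Variables r n : nat.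
Hypothesis r_gt0 : 0 < r.
Local Notation K := (2 * r).
Local Notation T := 'I_(2 * r * n).
Local Notation pi := (piPerm r n).

Lemma K_gt0 : 0 < K. Proof. by rewrite muln_gt0. Qed.

Lemma blk_subproof (p : T) : p %/ K < n.
Proof. by rewrite ltn_divLR ?K_gt0 // [n * _]mulnC. Qed.

Definition blk (p : T) : 'I_n := Ordinal (blk_subproof p).

Lemma pt_subproof (b : 'I_n) o : b * K + o %% K < 2 * r * n.
Proof.
apply: (@leq_trans (b.+1 * K)); first by rewrite mulSn addnC ltn_add2r ltn_pmod ?K_gt0.
by rewrite mulnC leq_mul2l ltn_ord orbT.
Qed.

Definition pt (b : 'I_n) (o : nat) : T := Ordinal (pt_subproof b o).

Lemma blk_pt b o : blk (pt b o) = b.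
Proof.
by apply: val_inj; rewrite /= divnMDl ?K_gt0 // divn_small ?addn0 // ltn_pmod ?K_gt0.
Qed.

Lemma pt_modK b o : pt b o %% K = o %% K.
Proof. by rewrite /= modnMDl modn_mod. Qed.

Lemma pt_blk_modK (p : T) : pt (blk p) (p %% K) = p.
Proof. by apply: val_inj; rewrite /= modn_mod -divn_eq. Qed.

Lemma pt_modn b o : pt b (o %% K) = pt b o.
Proof. by apply: val_inj; rewrite /= modn_mod. Qed.

Lemma pt_modDl b a c : pt b (a %% K + c) = pt b (a + c).
Proof. by apply: val_inj; rewrite /= modnDml. Qed.

Lemma sum_blk (F : 'I_n -> nat) : \sum_(p : T) F (blk p) = K * \sum_b F b.
Proof.
pose off (p : T) : 'I_K := Ordinal (ltn_pmod p K_gt0).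
rewrite (reindex (fun bo : 'I_n * 'I_K => pt bo.1 bo.2)) /=; last first.
  exists (fun p => (blk p, off p)) => [[b o] _ | p _] /=; last exact: pt_blk_modK.
  by congr (_, _); [exact: blk_pt | apply: val_inj; rewrite /= pt_modK modn_small].
rewrite -(pair_big predT predT (fun b (o : 'I_K) => F (blk (pt b o)))) big_distrr /=.
by apply: eq_bigr => b _; under eq_bigr do rewrite blk_pt; rewrite sum_nat_const card_ord.
Qed.

Lemma cycAE (j : 'I_n) (p : T) :
  cycA r j p = if blk p == j then pt (blk p) (p %% K).+1 else p.
Proof.
apply: val_inj; rewrite permE /blk_act val_insubd /cycA_bf /cycA_f.
have := pt_subproof (blk p) (p %% K).+1; have := pt_subproof (blk p) (p %% K).
rewrite modn_mod -[blk p == j]/(p %/ K == j).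
by case: (p %/ K == j) => /= h1 h2; rewrite ?h2 // h1 -divn_eq.
Qed.

Lemma cycAXE (j : 'I_n) k (p : T) :
  (cycA r j ^+ k)%g p = if blk p == j then pt (blk p) (p %% K + k) else p.
Proof.
elim: k p => [|k IH] p.
  by rewrite expg0 perm1 addn0 pt_blk_modK if_same.
rewrite expgSr permM IH; case: (blk p =P j) => [<- | /eqP/negbTE pj].
  by rewrite cycAE blk_pt eqxx pt_modK -[(_ %% K).+1]addn1 pt_modDl addn1 addnS.
by rewrite cycAE pj.
Qed.

Lemma prod_cycAE (f : 'I_n -> nat) (p : T) :
  (\prod_(j < n) cycA r j ^+ f j)%g p = pt (blk p) (p %% K + f (blk p)).
Proof.
have prod_seqE (s : seq 'I_n) q : (\prod_(j <- s) cycA r j ^+ f j)%g q =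
    pt (blk q) (q %% K + count_mem (blk q) s * f (blk q)).
  elim: s q => [|a s IH] q; first by rewrite big_nil perm1 addn0 pt_blk_modK.
  rewrite big_cons permM cycAXE /=; case: (eqVneq (blk q) a) => [<- | qa].
    by rewrite IH blk_pt pt_modK pt_modDl mulnDl mul1n addnA.
  by rewrite IH.
by rewrite prod_seqE /index_enum -enumT count_uniq_mem ?enum_uniq // mem_enum mul1n.
Qed.

Lemma piPermXE a (p : T) : (pi ^+ a)%g p = pt (blk p) (p %% K + a).
Proof.
elim: a p => [|a IH] p; first by rewrite expg0 perm1 addn0 pt_blk_modK.
rewrite expgSr permM IH /piPerm -(eq_bigr _ (fun j _ => expg1 (cycA r j))).
by rewrite prod_cycAE blk_pt pt_modK pt_modDl addn1 addnS.
Qed.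

Lemma piPerm_order : (pi ^+ K)%g = 1%g.
Proof.
apply/permP => p; rewrite piPermXE perm1 -[RHS]pt_blk_modK.
by apply: val_inj; rewrite /= modnDr.
Qed.

Lemma piPermX_eqmod a c (p : T) : (pi ^+ a)%g p = (pi ^+ c)%g p -> a = c %[mod K].
Proof.
rewrite !piPermXE => /(congr1 (fun q : T => q %% K)).
by rewrite !pt_modK => /eqP; rewrite eqn_modDl => /eqP.
Qed.

Lemma pt0_piPermX (p : T) : (pi ^+ (p %% K))%g (pt (blk p) 0) = p.
Proof. by rewrite piPermXE blk_pt pt_modK mod0n pt_blk_modK. Qed.

Lemma Bgrp_modK (w : {perm T}) : w \in Bgrp r n -> forall p, w p %% K = p %% K.
Proof.
move=> /gen_prodgP[m [c cB ->]].
apply: (big_ind (fun w : {perm T} => forall p, w p %% K = p %% K)) => //.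
- by move=> p; rewrite perm1.
- by move=> w1 w2 h1 h2 p; rewrite permM h2 h1.
move=> i _ p; have /imsetP[j _ ->] := cB i.
by rewrite permE /blk_act val_insubd /swB_f; case: ifP; rewrite //= modnMDl modn_mod.
Qed.

Section Centralizer.
Variable z : {perm T}.
Hypothesis z_pi : commute z pi.

Lemma commute_piPermX a p : z ((pi ^+ a)%g p) = (pi ^+ a)%g (z p).
Proof. by rewrite -!permM (commuteX a z_pi). Qed.

Definition blkperm_fun (b : 'I_n) : 'I_n := blk (z (pt b 0)).
Definition shift (b : 'I_n) : nat := z (pt b 0) %% K.

Lemma centralizerE0 p : z p = pt (blkperm_fun (blk p)) (p %% K + shift (blk p)).
Proof. by rewrite -{1}(pt0_piPermX p) commute_piPermX piPermXE addnC. Qed.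

Lemma blkperm_fun_inj : injective blkperm_fun.
Proof.
have z_pt b : z (pt b (K - shift b)) = pt (blkperm_fun b) 0.
  have shift_lt : shift b < K by rewrite ltn_pmod ?K_gt0.
  rewrite centralizerE0 blk_pt pt_modK [LHS]pt_modDl (subnK (ltnW shift_lt)).
  by rewrite -pt_modn modnn.
move=> b b' e.
have /perm_inj/(congr1 blk) : z (pt b (K - shift b)) = z (pt b' (K - shift b')).
  by rewrite !z_pt e.
by rewrite !blk_pt.
Qed.

Definition blkperm : {perm 'I_n} := perm blkperm_fun_inj.

Lemma centralizerE p : z p = pt (blkperm (blk p)) (p %% K + shift (blk p)).
Proof. by rewrite permE centralizerE0. Qed.

Definition shift_sum (k : nat) (b : 'I_n) : nat := \sum_(i < k) shift ((blkperm ^+ i)%g b).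

Lemma centralizerXE k p :
  (z ^+ k)%g p = pt ((blkperm ^+ k)%g (blk p)) (p %% K + shift_sum k (blk p)).
Proof.
elim: k p => [|k IH] p; first by rewrite !expg0 !perm1 /shift_sum big_ord0 addn0 pt_blk_modK.
rewrite expgSr permM IH centralizerE blk_pt pt_modK pt_modDl expgSr permM.
by rewrite /shift_sum big_ord_recr addnA.
Qed.

Lemma shift_sumD a c b :
  shift_sum (a + c) b = shift_sum a b + shift_sum c ((blkperm ^+ a)%g b).
Proof.
rewrite /shift_sum big_split_ord; congr (_ + _).
by apply: eq_bigr => i _; rewrite expgD permM.
Qed.

Lemma shift_sumM L m b : (blkperm ^+ L)%g b = b ->
  shift_sum (m * L) b = m * shift_sum L b.
Proof.
move=> bL; elim: m => [|m IH]; first by rewrite /shift_sum big_ord0.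
by rewrite mulSn shift_sumD bL IH mulSn.
Qed.

Hypothesis z_order : (z ^+ K)%g = 1%g.

Lemma blkperm_order b : (blkperm ^+ K)%g b = b.
Proof. by have := congr1 blk (centralizerXE K (pt b 0)); rewrite z_order perm1 !blk_pt. Qed.

Lemma dvdn_shift_sumK b : K %| shift_sum K b.
Proof.
have := centralizerXE K (pt b 0); rewrite z_order perm1.
move=> /(congr1 (fun q : T => q %% K)).
by rewrite !pt_modK mod0n add0n blk_pt => /esym/eqP.
Qed.

Definition period (b : 'I_n) : nat := #|porbit blkperm b|.

Lemma period_gt0 b : 0 < period b.
Proof. by rewrite lt0n card_porbit_neq0. Qed.

Lemma period_dvdK b : period b %| K.
Proof. exact: card_porbit_dvdn (blkperm_order b). Qed.

Lemma shift_sumK b : shift_sum K b = K %/ period b * shift_sum (period b) b.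
Proof. by rewrite -shift_sumM ?expg_card_porbit // divnK // period_dvdK. Qed.

Definition winding (b : 'I_n) : nat := shift_sum K b %/ K.

Lemma shift_sum_period b : shift_sum (period b) b = period b * winding b.
Proof.
have l_dvdK := period_dvdK b; have l_gt0 := period_gt0 b.
have [m Sm] : exists m, shift_sum (period b) b = period b * m.
  have Kl_gt0 : 0 < K %/ period b by rewrite divn_gt0 // dvdn_leq // K_gt0.
  have := dvdn_shift_sumK b; rewrite shift_sumK -{1}(divnK l_dvdK) dvdn_pmul2l //.
  by case/dvdnP => m ->; exists m; rewrite mulnC.
by rewrite /winding shift_sumK Sm mulnA (divnK l_dvdK) [K * m]mulnC (mulnK m K_gt0).
Qed.

Lemma winding_blkperm b : winding (blkperm b) = winding b.
Proof.
rewrite /winding; congr (_ %/ _).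
have := shift_sumD 1 K b; rewrite addnC shift_sumD blkperm_order expg1.
by rewrite addnC => /addnI ->.
Qed.

Lemma sum_shift_winding : \sum_b shift b = \sum_b winding b.
Proof.
apply/eqP; rewrite -(eqn_pmul2l K_gt0) !big_distrr /=; apply/eqP.
under [RHS]eq_bigr => b _ do rewrite /winding mulnC divnK ?dvdn_shift_sumK //.
rewrite /shift_sum exchange_big /=.
rewrite [RHS](eq_bigr (fun=> \sum_b shift b)) => [|i _].
  by rewrite sum_nat_const card_ord big_distrr.
by rewrite [RHS](reindex_inj (@perm_inj _ (blkperm ^+ i)%g)).
Qed.

Lemma centralizerX_period a p : period (blk p) %| a ->
  (z ^+ a)%g p = (pi ^+ (a * winding (blk p)))%g p.
Proof.
case/dvdnP => m ->; rewrite centralizerXE piPermXE (shift_sumM _ (expg_card_porbit _ _)).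
by rewrite shift_sum_period mulnA expgM_card_porbit.
Qed.

Lemma period_dvdn_blk a p : blk ((z ^+ a)%g p) = blk p -> period (blk p) %| a.
Proof. by rewrite centralizerXE blk_pt; apply: card_porbit_dvdn. Qed.

Lemma shift_decomposition w f : w \in Bgrp r n -> (forall j, f j < K) ->
  z = (w * \prod_(j < n) cycA r j ^+ f j)%g -> forall b, shift b = f (blkperm b).
Proof.
move=> wB f_lt zE b; rewrite /shift permE /blkperm_fun zE permM prod_cycAE.
by rewrite pt_modK blk_pt (Bgrp_modK wB) pt_modK mod0n add0n modn_small.
Qed.

Lemma sum_decomposition_winding w f : w \in Bgrp r n -> (forall j, f j < K) ->
  z = (w * \prod_(j < n) cycA r j ^+ f j)%g -> \sum_b f b = \sum_b winding b.
Proof.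
move=> wB f_lt zE; rewrite -sum_shift_winding (reindex_inj (@perm_inj _ blkperm)).
by apply: eq_bigr => b _; rewrite (shift_decomposition wB f_lt zE).
Qed.

End Centralizer.

Lemma conj_piPerm_order (h : {perm T}) : ((pi ^ h) ^+ K)%g = 1%g.
Proof. by rewrite -conjXg piPerm_order conj1g. Qed.

Lemma conj_piPermX (h : {perm T}) a p : ((pi ^ h) ^+ a)%g (h p) = h ((pi ^+ a)%g p).
Proof. by rewrite -conjXg conjgE !permM permK. Qed.

Lemma conj_piPermXV (h : {perm T}) a p :
  (h^-1)%g (((pi ^ h) ^+ a)%g p) = (pi ^+ a)%g ((h^-1)%g p).
Proof. by rewrite -{1}(permKV h p) conj_piPermX permK. Qed.

Lemma commute_conjV (g : {perm T}) : commute (pi ^ g)%g pi -> commute (pi ^ g^-1)%g pi.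
Proof. by move=> c; rewrite /commute -{2 3}(conjgK g pi) -!conjMg c. Qed.

Section Conjugate.
Variable g : {perm T}.
Hypotheses (y_pi : commute (pi ^ g)%g pi) (u_pi : commute (pi ^ g^-1)%g pi).
Local Notation y := (pi ^ g)%g.

Definition winding_conj (b : 'I_n) : nat := winding u_pi (blk ((g^-1)%g (pt b 0))).

Lemma winding_conj_pt p : winding u_pi (blk ((g^-1)%g p)) = winding_conj (blk p).
Proof.
rewrite -{1}(pt0_piPermX p) -conj_piPermX centralizerXE blk_pt.
exact: expg_invariant (winding_blkperm u_pi (conj_piPerm_order _)) _ _.
Qed.

Lemma winding_conj_blkperm b : winding_conj (blkperm y_pi b) = winding_conj b.
Proof.
have -> : blkperm y_pi b = blk (y (pt b 0)) by rewrite centralizerE !blk_pt.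
by rewrite -winding_conj_pt -(expg1 y) conj_piPermXV piPermXE blk_pt.
Qed.

Lemma sum_winding_conj : \sum_b winding u_pi b = \sum_b winding_conj b.
Proof.
apply/eqP; rewrite -(eqn_pmul2l K_gt0) -!sum_blk; apply/eqP.
rewrite (reindex_inj (@perm_inj _ (g^-1)%g)).
by apply: eq_bigr => p _; apply: winding_conj_pt.
Qed.

Lemma winding_conj_unit b :
  winding y_pi b * winding_conj b = 1 %[mod K %/ period y_pi b].
Proof.
have y_order := conj_piPerm_order g; have u_order := conj_piPerm_order (g^-1)%g.
set l := period y_pi b; set j := winding y_pi b; set q := (g^-1)%g (pt b 0).
have y_l : (y ^+ l)%g (pt b 0) = (pi ^+ (l * j))%g (pt b 0).
  by have := centralizerX_period y_order (p := pt b 0); rewrite blk_pt; apply.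
have u_q : ((pi ^ g^-1) ^+ (l * j))%g q = (pi ^+ l)%g q.
  by rewrite /q conj_piPermX -y_l conj_piPermXV.
have lj_dvd : period u_pi (blk q) %| l * j.
  by apply: period_dvdn_blk; rewrite u_q piPermXE blk_pt.
have l_dvdK : l %| K := period_dvdK y_pi y_order b.
have l_eq : l = l * j * winding_conj b %[mod K].
  by apply: (piPermX_eqmod (p := q)); rewrite -u_q (centralizerX_period u_order lj_dvd).
apply: (@eqmod_pmul2l l); first exact: period_gt0.
by rewrite (mulnC _ (K %/ _)) (divnK l_dvdK) muln1 mulnA -l_eq.
Qed.

Lemma sum_winding_conj_even : ~~ odd (\sum_b (winding y_pi b + winding_conj b)).
Proof.
rewrite -dvdn2; apply: (dvdn_sum_invariant (s := blkperm y_pi)) => b.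
  by rewrite (winding_blkperm _ (conj_piPerm_order g)) winding_conj_blkperm.
apply: eqmod1_dvd2 (winding_conj_unit b) _.
rewrite (mulnC _ (K %/ _)) (divnK (period_dvdK _ (conj_piPerm_order g) b)).
exact: dvdn_mulr r (dvdnn 2).
Qed.

Lemma sum_winding_conj_mod4 : ~~ odd r -> ~~ odd n ->
  4 %| \sum_b (winding y_pi b + winding_conj b).
Proof.
move=> r_even n_even.
have : 4 %| \sum_b (winding y_pi b + winding_conj b + 2).
  apply: (dvdn_sum_invariant (s := blkperm y_pi)) => b.
    by rewrite (winding_blkperm _ (conj_piPerm_order g)) winding_conj_blkperm.
  apply: eqmod1_dvd4 (winding_conj_unit b) _.
  rewrite (mulnC _ (K %/ _)) (divnK (period_dvdK _ (conj_piPerm_order g) b)).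
  by rewrite (_ : 4 = 2 * 2) // dvdn_pmul2l // dvdn2.
rewrite big_split sum_nat_const card_ord /= dvdn_addl //.
by rewrite mulnC (_ : 4 = 2 * 2) // dvdn_pmul2l // dvdn2.
Qed.

End Conjugate.
End Blocks.

Theorem lemma2p18 (r n : nat) (hr : 2 <= r) (hn : 2 <= n)
  (t g B B' : {perm 'I_(2 * r * n)}) (d e : 'I_n -> nat) :
  t \in (piPerm r n ^: [set: {perm 'I_(2 * r * n)}])%g ->
  (t * piPerm r n = piPerm r n * t)%g ->
  t = (piPerm r n ^ g)%g ->
  (forall j, d j < 2 * r) -> (forall j, e j < 2 * r) ->
  B \in Bgrp r n -> B' \in Bgrp r n ->
  t = (B * \prod_(j < n) cycA r j ^+ d j)%g ->
  (piPerm r n ^ g^-1)%g = (B' * \prod_(j < n) cycA r j ^+ e j)%g ->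
  (odd n -> ~~ odd (\sum_(j < n) (e j + d j))) /\
  (~~ odd r -> ~~ odd n -> 4 %| \sum_(j < n) (e j + d j)).
Proof.
move=> _ t_pi t_conj d_lt e_lt B_in B'_in t_dec u_dec.
have r_gt0 : 0 < r := ltnW hr.
subst t; have u_pi := commute_conjV t_pi.
have -> : \sum_(j < n) (e j + d j) =
    \sum_b (winding r_gt0 t_pi b + winding_conj r_gt0 u_pi b).
  have [y_order u_order] := (conj_piPerm_order r_gt0 g, conj_piPerm_order r_gt0 g^-1).
  rewrite big_split /= (sum_decomposition_winding r_gt0 u_pi u_order B'_in e_lt u_dec).
  rewrite (sum_decomposition_winding r_gt0 t_pi y_order B_in d_lt t_dec).
  by rewrite sum_winding_conj addnC big_split.
by split=> [_|]; [exact: sum_winding_conj_even | exact: sum_winding_conj_mod4].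
Qed.
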